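(* Let $g:\mathbb{R}^m\to\mathbb{R}$ be separable convex, i.e. $g(v) = \sum_{i=1}^m g_i(v_i)$ with each $g_i:\mathbb{R}\to\mathbb{R}$ convex, and let $W\in\mathbb{Z}^{m\times n}$. Then $f(x) = g(Wx)$ admits a $\delta$-proximity with $\delta \le 2m(2m\|W\|_\infty + 1)^m$; that is, for every minimizer $x^\star$ of $f$ over $[0,1]^n$ with at most $m$ fractional entries there exists a minimizer $z^\star$ of $f$ over $\{0,1\}^n$ with $\|x^\star - z^\star\|_1 \le 2m(2m\|W\|_\infty + 1)^m$.
   Context: $\|W\|_\infty$ denotes the maximum absolute value of an entry of $W$. A fractional entry of $x\in[0,1]^n$ is an entry not in $\{0,1\}$. *)

From mathcomp Require Import all_boot all_order all_algebra.
From mathcomp Require Import reals.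
Set Implicit Arguments. Unset Strict Implicit. Unset Printing Implicit Defensive.
Import Order.TTheory GRing.Theory Num.Theory.
Local Open Scope ring_scope.

Definition convex_fun (R : realFieldType) (h : R -> R) : Prop :=
  forall (a b t : R), 0 <= t -> t <= 1 ->
    h (t * a + (1 - t) * b) <= t * h a + (1 - t) * h b.

Definition matvec (R : realFieldType) (m n : nat) (W : 'M[int]_(m, n))
  (x : 'I_n -> R) (i : 'I_m) : R :=
  \sum_(j < n) (W i j)%:~R * x j.

Definition sepf (R : realFieldType) (m n : nat) (g : 'I_m -> R -> R)
  (W : 'M[int]_(m, n)) (x : 'I_n -> R) : R :=
  \sum_(i < m) g i (matvec W x i).

Definition maxabs (m n : nat) (W : 'M[int]_(m, n)) : nat :=
  \max_(i < m) \max_(j < n) `|W i j|%N.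

Definition in_box (R : realFieldType) (n : nat) (x : 'I_n -> R) : Prop :=
  forall j, 0 <= x j <= 1.

Definition is_binary (R : realFieldType) (n : nat) (x : 'I_n -> R) : Prop :=
  forall j, x j = 0 \/ x j = 1.

Definition nfrac (R : realFieldType) (n : nat) (x : 'I_n -> R) : nat :=
  #|[set j | (x j != 0) && (x j != 1)]|.

Definition l1dist (R : realFieldType) (n : nat) (x y : 'I_n -> R) : R :=
  \sum_(j < n) `|x j - y j|.

From mathcomp Require Import all_boot all_order all_algebra.
From mathcomp Require Import reals.
From mathcomp Require Import zify ring lra.
Set Implicit Arguments. Unset Strict Implicit. Unset Printing Implicit Defensive.
Import Order.TTheory GRing.Theory Num.Theory.
Local Open Scope ring_scope.

(* Let x be the minimizer over the box and z a binary minimizer chosen closest to x.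
   If z were far from x, many integral coordinates j of x would differ from z, each
   contributing the column +-W_j to W z - W x; their sum is within m ||W|| of the
   vector t obtained by rounding W z - W x toward 0.  Together with |t_i| copies of
   -sgn(t_i) e_i and m chunks of norm <= ||W|| absorbing the discrepancy, they form
   a zero-sum family of integer vectors of norm <= ||W||.  The Steinitz lemma orders
   it with all prefix sums bounded by m ||W||, and pigeonhole on (number of chunks
   used, prefix sum) yields a nonempty chunk-free zero-sum segment.  It selects a set
   B of flipped coordinates whose contribution lies between 0 and W z - W x
   coordinatewise, so by convexity exchanging x and z on B does not increase
   f x + f z.  As x is optimal over the box, z with B reset to x is a binary
   minimizer closer to x. *)

(** * The Steinitz lemma *)

Section Steinitz.
Variables (R : realFieldType) (T : finType) (m : nat) (v : T -> 'I_m -> R).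

Lemma exists_affine_dependence (J : {set T}) : (m.+1 < #|J|)%N ->
  exists gam : T -> R, [/\ forall t, t \notin J -> gam t = 0,
    exists t, gam t != 0, \sum_t gam t = 0 &
    forall i, \sum_t gam t * v t i = 0].
Proof.
move=> bigJ.
pose M : 'M[R]_(#|J|, m + 1) :=
  row_mx (\matrix_(c, i) v (enum_val c) i) (const_mx 1).
have /rowV0Pn [y /sub_kermxP yM y_neq0] : kermx M != 0.
  rewrite -mxrank_eq0 mxrank_ker subn_eq0 -ltnNge.
  by apply: leq_ltn_trans (rank_leq_col M) _; rewrite addn1.
move: yM; rewrite mul_mx_row -row_mx0 => /eq_row_mx [yv y1].
pose gam t := \sum_(c < #|J|) (enum_val c == t)%:R * y 0 c.
have gamE f : \sum_t gam t * f t = \sum_(c < #|J|) y 0 c * f (enum_val c).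
  under eq_bigr do rewrite mulr_suml.
  rewrite exchange_big; apply: eq_bigr => c _.
  rewrite (bigD1 (enum_val c)) //= eqxx mul1r big1 ?addr0 // => t /negbTE ct.
  by rewrite eq_sym ct !mul0r.
exists gam; split.
- move=> t tJ; apply: big1 => c _.
  by case: eqP => [ct|]; [move: tJ; rewrite -ct enum_valP | rewrite mul0r].
- have [c yc] : exists c, y 0 c != 0.
    apply/existsP; apply: contraR y_neq0 => /existsPn y0.
    by apply/eqP/rowP => c; rewrite mxE; apply/eqP/negPn.
  exists (enum_val c); rewrite /gam (bigD1 c) //= eqxx mul1r big1 ?addr0 //.
  by move=> c' /negbTE; rewrite (inj_eq enum_val_inj) => ->; rewrite mul0r.
- have := gamE (fun _ => 1); under eq_bigr do rewrite mulr1; move=> ->.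
  have := congr1 (fun N : 'M_1 => N 0 0) y1; rewrite !mxE => {2}<-.
  by apply: eq_bigr => c _; rewrite mxE.
- move=> i; rewrite gamE.
  have := congr1 (fun N : 'M_(1, m) => N 0 i) yv; rewrite !mxE => {2}<-.
  by apply: eq_bigr => c _; rewrite mxE.
Qed.


(* The largest [s] keeping [a + s * g] in [[0, 1]]. *)
Definition max_step (a g : R) := if 0 < g then (1 - a) / g else - a / g.

Lemma max_stepK a g : g != 0 -> max_step a g * g = if 0 < g then 1 - a else - a.
Proof. by move=> g0; rewrite /max_step; case: ifP => _; rewrite divfK. Qed.

Lemma max_step_gt0 a g : 0 < a < 1 -> g != 0 -> 0 < max_step a g.
Proof.
move=> /andP [a0 a1] g0; rewrite /max_step; case: ifPn => [gpos | gneg].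
  by rewrite divr_gt0 // subr_gt0.
have gneg' : g < 0 by rewrite lt_neqAle g0 leNgt.
by rewrite -mulrNN opprK -invrN divr_gt0 ?oppr_gt0.
Qed.

Lemma add_step_in01 a g s : 0 < a < 1 -> g != 0 -> 0 <= s <= max_step a g ->
  0 <= a + s * g <= 1.
Proof.
move=> a01 g0 /andP [s0 s_le]; have := max_stepK a g0.
case/andP: a01 => a0 a1; case: ifPn => [gpos | gneg] stepE.
  have : s * g <= max_step a g * g by rewrite ler_pM2r.
  by have := mulr_ge0 s0 (ltW gpos); rewrite stepE => *; apply/andP; split; lra.
have gneg' : g < 0 by rewrite lt_neqAle g0 leNgt.
have : max_step a g * g <= s * g by rewrite ler_nM2r.
by have := mulr_ge0_le0 s0 (ltW gneg'); rewrite stepE => *; apply/andP; split; lra.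
Qed.

Lemma add_max_step_frac a g : g != 0 -> ~~ (0 < a + max_step a g * g < 1).
Proof. by move=> /max_stepK ->; case: ifP => _; apply/negP => /andP [*]; lra. Qed.

Definition zero_weighting (S : {set T}) (c : R) (mu : T -> R) :=
  [/\ forall t, t \in S -> 0 <= mu t <= 1, \sum_(t in S) mu t = c &
      forall i, \sum_(t in S) mu t * v t i = 0].

Definition frac_support (S : {set T}) (mu : T -> R) := [set t in S | 0 < mu t < 1].

Lemma zero_weighting_reduce S c mu : zero_weighting S c mu ->
  (m.+1 < #|frac_support S mu|)%N ->
  exists2 mu', zero_weighting S c mu' &
    (#|frac_support S mu'| < #|frac_support S mu|)%N.
Proof.
move=> [mu01 mu_sum mu_v] /exists_affine_dependence [gam [gam_out [t1 gam_t1]]].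
move=> gam_sum gam_v; set F := frac_support S mu in gam_out *.
have gamF t : gam t != 0 -> t \in F by apply: contraNT => /gam_out ->.
have sum_in_S f : \sum_(t in S) gam t * f t = \sum_t gam t * f t.
  rewrite [RHS](bigID (mem S)) /= [X in _ + X]big1 ?addr0 // => t tS.
  have [-> | /gamF] := eqVneq (gam t) 0; first by rewrite mul0r.
  by rewrite inE (negbTE tS).
pose t0 := [arg min_(t < t1 | gam t != 0) max_step (mu t) (gam t)]%O.
have [gam_t0 t0_min] : gam t0 != 0 /\
    forall t, gam t != 0 -> max_step (mu t0) (gam t0) <= max_step (mu t) (gam t).
  by rewrite /t0; case: arg_minP => // t gt t_min; split => // u /t_min.
pose s := max_step (mu t0) (gam t0); pose mu' t := mu t + s * gam t.
have s_ge0 : 0 <= s.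
  by apply/ltW/max_step_gt0 => //; move: (gamF _ gam_t0); rewrite inE => /andP [].
exists mu'; first split.
- move=> t tS; rewrite /mu'; have [-> | gt] := eqVneq (gam t) 0.
    by rewrite mulr0 addr0 mu01.
  move: (gamF _ gt); rewrite inE => /andP [_ mut].
  by apply: add_step_in01; rewrite // s_ge0 t0_min.
- have gam_sumS : \sum_(t in S) gam t = 0.
    by have := sum_in_S (fun _ => 1); rewrite !(eq_bigr _ (fun _ _ => mulr1 _)) gam_sum.
  by rewrite /mu' big_split /= mu_sum -mulr_sumr gam_sumS mulr0 addr0.
- move=> i; under eq_bigr do rewrite mulrDl -mulrA.
  by rewrite big_split /= mu_v -mulr_sumr sum_in_S gam_v mulr0 addr0.
have t0F := gamF _ gam_t0.
rewrite (cardsD1 t0 F) t0F ltnS; apply: subset_leq_card; apply/subsetP => t.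
rewrite !inE => /andP [tS mu't]; apply/andP; split.
  by apply: contraTneq mu't => ->; exact: add_max_step_frac.
have [gt0 | /gamF] := eqVneq (gam t) 0; last by rewrite inE.
by move: mu't; rewrite /mu' gt0 mulr0 addr0 tS.
Qed.

Lemma exists_zero_weighting_few_frac S c mu : zero_weighting S c mu ->
  exists2 mu', zero_weighting S c mu' & (#|frac_support S mu'| <= m.+1)%N.
Proof.
have [N] := ubnP #|frac_support S mu|; elim: N mu => // N IH mu ltN mu_w.
have [small | big] := leqP #|frac_support S mu| m.+1; first by exists mu.
have [mu' mu'_w lt_mu'] := zero_weighting_reduce mu_w big.
exact: IH (leq_trans lt_mu' _) mu'_w.
Qed.

Lemma zero_weighting_scale S c mu a : zero_weighting S c mu -> 0 <= a <= 1 ->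
  zero_weighting S (c * a) (fun t => mu t * a).
Proof.
move=> [mu01 mu_sum mu_v] /andP [a0 a1]; split.
- move=> t /mu01 /andP [mu0 mu1]; rewrite mulr_ge0 //; exact: mulr_ile1.
- by rewrite -mulr_suml mu_sum.
- by move=> i; under eq_bigr do rewrite mulrAC; rewrite -mulr_suml mu_v mul0r.
Qed.

Lemma zero_weighting_has_zero S (k : nat) mu : zero_weighting S k%:R mu ->
  (#|frac_support S mu| <= m.+1)%N -> (k + m < #|S|)%N -> exists2 t, t \in S & mu t = 0.
Proof.
move=> [mu01 mu_sum _] few big.
have [/exists_inP [t tS /eqP] | /exists_inPn mu_pos] := boolP [exists t in S, mu t == 0].
  by exists t.
set F := frac_support S mu in few.
have FS : F \subset S by apply/subsetP => t; rewrite inE => /andP [].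
have one_minus : \sum_(t in S) (1 - mu t) = \sum_(t in F) (1 - mu t).
  rewrite (big_setID F) /= (setIidPr FS) [X in _ + X]big1 ?addr0 // => t.
  rewrite !inE => /andP [tF tS]; move: (mu01 t tS) (mu_pos t tS) tF.
  rewrite tS /= => /andP [mu0 mu1] mu_neq0.
  have mu_gt0 : 0 < mu t by rewrite lt_neqAle eq_sym mu_neq0.
  by rewrite mu_gt0 /= -leNgt => mu1'; apply/eqP; rewrite subr_eq0 eq_le mu1 mu1'.
have : \sum_(t in F) (1 - mu t) < m.+1%:R.
  have [-> | [t0 t0F]] := set_0Vmem F; first by rewrite big_set0 ltr0n.
  apply: (@lt_le_trans _ _ (\sum_(t in F) 1)); last by rewrite sumr_const ler_nat.
  apply: ltr_sum; first by apply/hasP; exists t0; rewrite ?mem_index_enum.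
  by move=> t; rewrite inE => /andP [_ /andP [mu0 _]]; rewrite ltrBlDr ltrDl.
rewrite -one_minus sumrB mu_sum sumr_const -natrB ?ltr_nat; lia.
Qed.

(* Grinberg and Sevast'yanov: a balanced set stays balanced after removing a
   suitable element, and the weights [1 - lam] bound its total sum by [m D]. *)
Definition balanced (S : {set T}) :=
  (m <= #|S|)%N /\ exists lam, zero_weighting S (#|S| - m)%:R lam.

Lemma balanced_of_sum0 (S : {set T}) : (m <= #|S|)%N -> (forall i, \sum_(t in S) v t i = 0) ->
  balanced S.
Proof.
move=> mS sum0; split => //; exists (fun _ => (#|S| - m)%:R / #|S|%:R); split.
- move=> t tS; have S0 : (0 < #|S|)%N by apply/card_gt0P; exists t.
  by rewrite divr_ge0 //= ler_pdivrMr ?ltr0n // mul1r ler_nat leq_subr.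
- rewrite sumr_const -[_ *+ #|S|]mulr_natr; have [S0 | S0] := posnP #|S|.
    by rewrite S0 sub0n mulr0.
  by rewrite divfK // pnatr_eq0 -lt0n.
- by move=> i; rewrite -mulr_sumr sum0 mulr0.
Qed.

Lemma balanced_remove (S : {set T}) : (m < #|S|)%N -> balanced S ->
  exists2 t, t \in S & balanced (S :\ t).
Proof.
move=> mS [_ [lam lam_w]].
have [k Sk] : exists k, #|S| = (k.+1 + m)%N by exists (#|S| - m).-1; lia.
have a01 : 0 <= (k%:R / k.+1%:R : R) <= 1.
  by rewrite divr_ge0 //= ler_pdivrMr ?ltr0n // mul1r ler_nat.
have := zero_weighting_scale lam_w a01.
rewrite Sk addnK mulrC divfK ?pnatr_eq0 //.
move=> /exists_zero_weighting_few_frac [mu [mu01 mu_sum mu_v] few].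
have [|t tS mu_t] := zero_weighting_has_zero (And3 mu01 mu_sum mu_v) few; first lia.
have St : #|S :\ t| = (k + m)%N by move: Sk; rewrite (cardsD1 t) tS; lia.
exists t => //; split; first by rewrite St leq_addl.
exists mu; rewrite St addnK; split.
- by move=> x /setD1P [_]; exact: mu01.
- by move: mu_sum; rewrite (big_setD1 t) //= mu_t add0r.
- by move=> i; move: (mu_v i); rewrite (big_setD1 t) //= mu_t mul0r add0r.
Qed.

Lemma balanced_sum_bound (S : {set T}) (D : R) : balanced S ->
  (forall t i, t \in S -> `|v t i| <= D) -> forall i, `|\sum_(t in S) v t i| <= m%:R * D.
Proof.
move=> [mS [lam [lam01 lam_sum lam_v]]] vD i.
have lam'01 t : t \in S -> 0 <= 1 - lam t by move/lam01 => /andP [_]; rewrite subr_ge0.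
have -> : \sum_(t in S) v t i = \sum_(t in S) (1 - lam t) * v t i.
  by under [RHS]eq_bigr do rewrite mulrBl mul1r; rewrite sumrB lam_v subr0.
apply: le_trans (ler_norm_sum _ _ _) _.
apply: (@le_trans _ _ (\sum_(t in S) (1 - lam t) * D)).
  apply: ler_sum => t tS; rewrite normrM ger0_norm ?lam'01 //.
  by apply: ler_wpM2l; [exact: lam'01 | exact: vD].
by rewrite -mulr_suml sumrB lam_sum sumr_const natrB // opprB addrC subrK.
Qed.

Lemma norm_sum_seq_le (r : seq T) (D : R) i : (forall t, t \in r -> `|v t i| <= D) ->
  `|\sum_(t <- r) v t i| <= (size r)%:R * D.
Proof.
elim: r => [|x r IH] vD; first by rewrite big_nil normr0 mul0r.
rewrite big_cons /= -addn1 natrD mulrDl mul1r.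
apply: le_trans (ler_normD _ _) _; rewrite addrC; apply: lerD.
  by apply: IH => t tr; apply: vD; rewrite in_cons tr orbT.
by apply: vD; rewrite mem_head.
Qed.

Lemma balanced_steinitz (S : {set T}) (D : R) : 0 <= D -> (#|S| <= m)%N \/ balanced S ->
  (forall t i, t \in S -> `|v t i| <= D) ->
  exists s, [/\ uniq s, s =i S & forall k i, `|\sum_(t <- take k s) v t i| <= m%:R * D].
Proof.
move=> D0; have [N] := ubnP #|S|; elim: N S => // N IH S ltN S_bal vD.
have [small | big] := leqP #|S| m.
  exists (enum S); split=> [||k i]; [exact: enum_uniq | exact: mem_enum |].
  apply: le_trans (norm_sum_seq_le (D := D) _) _.
    by move=> t /mem_take; rewrite mem_enum => /vD.
  rewrite ler_wpM2r // ler_nat size_take_min -cardE.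
  exact: leq_trans (geq_minr _ _) small.
have S_bal' : balanced S by case: S_bal; rewrite // leqNgt big.
have [t tS St_bal] := balanced_remove big S_bal'.
have St : #|S| = #|S :\ t|.+1 by rewrite (cardsD1 t) tS.
have [|||s' [s'_uniq s'E s'_bound]] := IH (S :\ t).
- by rewrite -ltnS -St.
- by right.
- by move=> x i /setD1P [_]; exact: vD.
have ts' : t \notin s' by rewrite s'E setD11.
have sE : rcons s' t =i S.
  by move=> x; rewrite mem_rcons in_cons s'E in_setD1; case: eqVneq => [->|].
exists (rcons s' t); split=> [||k i]; first by rewrite rcons_uniq ts' s'_uniq.
  exact: sE.
have [k_le | k_gt] := leqP k (size s'); first by rewrite -cats1 takel_cat.
rewrite take_oversize ?size_rcons // big_uniq ?rcons_uniq ?ts' //=.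
rewrite (eq_bigl _ _ sE); exact: balanced_sum_bound.
Qed.

Lemma steinitz (S : {set T}) (D : R) : 0 <= D -> (forall i, \sum_(t in S) v t i = 0) ->
  (forall t i, t \in S -> `|v t i| <= D) ->
  exists s, [/\ uniq s, s =i S & forall k i, `|\sum_(t <- take k s) v t i| <= m%:R * D].
Proof.
move=> D0 sum0; apply: balanced_steinitz => //.
by have [small | big] := leqP #|S| m; [left | right; apply: balanced_of_sum0 (ltnW big) _].
Qed.

End Steinitz.

(** * Zero-sum subfamilies of integer vectors *)

Lemma steinitz_int (T : finType) (m D : nat) (v : T -> 'I_m -> int) (S : {set T}) :
  (forall i, \sum_(t in S) v t i = 0) -> (forall t i, t \in S -> (`|v t i| <= D)%N) ->
  exists s, [/\ uniq s, s =i S &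
    forall k i, (`|(\sum_(t <- take k s) v t i)%R| <= m * D)%N].
Proof.
move=> sum0 vD.
have [|||s [s_uniq sS s_bound]] := @steinitz rat T m (fun t i => (v t i)%:~R) S D%:R.
- exact: ler0n.
- by move=> i; rewrite -rmorph_sum /= sum0.
- by move=> t i tS; rewrite -intr_norm -natr_absz ler_nat vD.
exists s; split=> // k i; have := s_bound k i.
by rewrite -rmorph_sum /= -intr_norm -natr_absz -natrM ler_nat.
Qed.

Lemma count_take_le (T : Type) (a : pred T) (s : seq T) k :
  (count a (take k s) <= count a s)%N.
Proof. by rewrite -{2}(cat_take_drop k s) count_cat leq_addr. Qed.

Lemma exists_zero_sum_segment (T : eqType) (m K : nat) (v : T -> 'I_m -> int)
    (Q : pred T) (s : seq T) :
  (forall k i, (`|(\sum_(t <- take k s) v t i)%R| <= K)%N) ->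
  ((count Q s).+1 * (2 * K).+1 ^ m < (size s).+1)%N ->
  exists r, [/\ r != [::], subseq r s, ~~ has Q r & forall i, \sum_(t <- r) v t i = 0].
Proof.
move=> s_bound few_Q.
pose P k i : int := \sum_(t <- take k s) v t i.
pose code (k : 'I_(size s).+1) : 'I_(count Q s).+1 * {ffun 'I_m -> 'I_(2 * K).+1} :=
  (inord (count Q (take k s)), [ffun i => inord (absz (P k i + K%:Z))]).
have /injectivePn [k [l k_neq_l [count_eq P_eq]]] : ~~ injectiveb code.
  apply/injectiveP => /leq_card; rewrite card_prod card_ffun !card_ord.
  by rewrite leqNgt few_Q.
wlog lt_kl : k l k_neq_l count_eq P_eq / (k < l)%N.
  move=> wlog_kl; have [||/val_inj kl] := ltngtP k l; first exact: wlog_kl.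
    by apply: (wlog_kl l k); rewrite // eq_sym.
  by rewrite kl eqxx in k_neq_l.
have {}count_eq : count Q (take k s) = count Q (take l s).
  by move: count_eq => /(congr1 val); rewrite /= !inordK // ltnS count_take_le.
have {}P_eq i : P k i = P l i.
  have bound_k : (`|P k i| <= K)%N := s_bound k i.
  have bound_l : (`|P l i| <= K)%N := s_bound l i.
  have := congr1 (fun f : {ffun _ -> 'I_(2 * K).+1} => val (f i)) P_eq.
  by rewrite /= !ffunE /= !inordK; lia.
pose r := drop k (take l s).
have take_l : take l s = take k s ++ r.
  by rewrite -[LHS](cat_take_drop k) -take_min (minn_idPl (ltnW lt_kl)).
exists r; split.
- rewrite -size_eq0 size_drop size_takel; first by rewrite subn_eq0 -ltnNge.
  by rewrite -ltnS.
- exact: subseq_trans (drop_subseq _ _) (take_subseq _ _).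
- by move: count_eq; rewrite has_count take_l count_cat; lia.
- move=> i; move: (P_eq i); rewrite /P take_l big_cat /= => /eqP.
  by rewrite -subr_eq0 opprD addrA subrr sub0r oppr_eq0 => /eqP.
Qed.

Lemma exists_zero_sum_subset_avoiding (T : finType) (m D : nat) (v : T -> 'I_m -> int)
    (A Q : {set T}) :
  (forall t i, t \in A -> (`|v t i| <= D)%N) -> (forall i, \sum_(t in A) v t i = 0) ->
  (#|Q|.+1 * (2 * m * D + 1) ^ m < #|A|.+1)%N ->
  exists B : {set T},
    [/\ B \subset A, [disjoint B & Q], B != set0 & forall i, \sum_(t in B) v t i = 0].
Proof.
move=> vD sum0 few_Q.
have [s [s_uniq sA s_bound]] := steinitz_int sum0 vD.
have count_Q : (count (mem Q) s <= #|Q|)%N.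
  rewrite -size_filter -(card_uniqP (filter_uniq _ s_uniq)).
  by apply/subset_leq_card/subsetP => t; rewrite mem_filter => /andP [].
have size_s : size s = #|A| by rewrite -(card_uniqP s_uniq); apply: eq_card.
have [|r [r_nil r_sub r_Q r_sum]] := exists_zero_sum_segment (Q := mem Q) s_bound.
  rewrite size_s mulnA; apply: leq_trans _ few_Q.
  by rewrite ltnS addn1 leq_mul2r ltnS count_Q orbT.
have rE : [set t in r] =i r by move=> t; rewrite inE.
exists [set t in r]; split.
- by apply/subsetP => t; rewrite rE -sA; exact: mem_subseq.
- by rewrite (eq_disjoint rE) disjoint_has.
- have /hasP [t rt _] : has predT r by rewrite has_predT lt0n size_eq0.
  by apply/set0Pn; exists t; rewrite rE.
- move=> i; rewrite -[RHS](r_sum i) big_uniq; last exact: subseq_uniq r_sub s_uniq.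
  by apply: eq_bigl => t; rewrite rE.
Qed.

(** * Conformal subsums *)

Definition in_seg0 (R : numDomainType) (c u : R) := (0 <= c <= u) || (u <= c <= 0).

Lemma in_seg0_sgz (c : nat) (w : int) : (c <= `|w|)%N -> in_seg0 (sgz w * c%:Z) w.
Proof. by rewrite /in_seg0; case: sgzP => w_sign; rewrite ?mul0r ?mul1r ?mulN1r; lia. Qed.

Lemma in_seg0_trans (R : realDomainType) (c t u : R) :
  in_seg0 c t -> in_seg0 t u -> in_seg0 c u.
Proof.
move=> ct /orP [] /andP [t_lo t_hi]; apply/orP; [left | right];
  by case/orP: ct => /andP [c_lo c_hi]; apply/andP; split; lra.
Qed.

Lemma in_seg0_intr (R : realDomainType) (c t : int) :
  in_seg0 (c%:~R : R) t%:~R = in_seg0 c t.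
Proof. by rewrite /in_seg0 ler0z lerz0 !ler_int. Qed.

Lemma sum_minn_sub (D q k : nat) :
  (\sum_(l < k) minn D (q - l * D) = minn (k * D) q)%N.
Proof. by elim: k => [|k IH]; rewrite ?big_ord0 ?big_ord_recr /= ?IH; lia. Qed.

Definition chunk (D : nat) (q : int) (l : nat) : int := sgz q * (minn D (`|q| - l * D))%:Z.

Lemma chunk_bound D q l : (`|chunk D q l| <= D)%N.
Proof. by rewrite abszM; case: sgzP => _ /=; rewrite ?mul0n ?mul1n ?geq_minl. Qed.

Lemma sum_chunk D q k : (`|q| <= k * D)%N -> \sum_(l < k) chunk D q l = q.
Proof.
move=> q_le; rewrite -mulr_sumr; under eq_bigr do rewrite -natz.
by rewrite -natr_sum sum_minn_sub (minn_idPr q_le) natz -intEsg.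
Qed.

Lemma card_ord_lt (L n : nat) : (n <= L)%N -> #|[set k : 'I_L | (k < n)%N]| = n.
Proof.
move=> nL; rewrite -sum1_card (eq_bigl (fun k : 'I_L => true && (k < n)%N)); last first.
  by move=> k; rewrite inE.
by rewrite -(big_ord_widen_cond L xpredT (fun _ => 1%N) nL) sum1_card card_ord.
Qed.

Lemma sum_copies (V : nmodType) (m L : nat) (P : 'I_m -> 'I_L -> bool) (c : V) i :
  \sum_(p | P p.1 p.2) (if p.1 == i then c else 0) = c *+ #|[set k | P i k]|.
Proof.
rewrite -(pair_big_dep xpredT P (fun i' _ => if i' == i then c else 0)) /=.
rewrite (bigD1 i) //= eqxx [X in _ + X]big1 ?addr0; last first.
  by move=> i' /negbTE ->; exact: big1.
by rewrite -sumr_const; apply: eq_bigl => k; rewrite inE.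
Qed.

Section ConformalSubsum.
Variables (K : finType) (m D : nat) (a : K -> 'I_m -> int) (I : {set K}) (w : 'I_m -> int).
Hypotheses (a_bound : forall j i, j \in I -> (`|a j i| <= D)%N)
  (sum_near_w : forall i, (`|(\sum_(j in I) a j i - w i)%R| <= m * D)%N).

Local Notation L := (\max_i `|w i|).+1.
Local Notation T := ((K + 'I_m * 'I_L) + 'I_m)%type.

Definition conformal_vec (x : T) i : int :=
  match x with
  | inl (inl j) => a j i
  | inl (inr p) => if p.1 == i then - sgz (w i) else 0
  | inr l => - chunk D (\sum_(j in I) a j i - w i) l
  end.

Definition conformal_dom : {set T} :=
  [set x : T | match x with
               | inl (inl j) => j \in I
               | inl (inr p) => (p.2 < `|w p.1|)%N
               | inr _ => true
               end].

Definition chunk_set : {set T} := [set inr l | l : 'I_m].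

Lemma sum_conformal_vec (X : {set T}) i :
  \sum_(x in X) conformal_vec x i =
    \sum_(j | inl (inl j) \in X) a j i - sgz (w i) *+ #|[set k | inl (inr (i, k)) \in X]|
    - \sum_(l | inr l \in X) chunk D (\sum_(j in I) a j i - w i) l.
Proof.
rewrite big_sumType big_sumType /= sumrN; congr (_ + _ - _).
rewrite (eq_bigl (fun p => inl (inr (p.1, p.2)) \in X)) => [| []//].
by rewrite (sum_copies (fun i' k => inl (inr (i', k)) \in X)) mulNrn.
Qed.

Lemma abs_w_lt i : (`|w i| < L)%N.
Proof. by rewrite ltnS (leq_bigmax (F := fun i => `|w i|%N)). Qed.

Lemma conformal_vec_bound x i : x \in conformal_dom -> (`|conformal_vec x i| <= D)%N.
Proof.
rewrite inE; case: x => [[j | [i' k]] | l] /= x_dom; first exact: a_bound.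
  case: eqP => [<- | _] //; rewrite abszN.
  have w_neq0 : w i' != 0 by apply: contraTneq x_dom => ->.
  suff D_pos : (0 < D)%N by case: sgzP w_neq0 => //; rewrite eqxx.
  rewrite lt0n; apply: contra w_neq0 => /eqP D0; have := sum_near_w i'.
  rewrite D0 muln0 big1 ?sub0r => [| j jI]; last first.
    by apply/eqP; rewrite -absz_eq0 -leqn0 -D0 a_bound.
  by rewrite abszN leqn0 absz_eq0.
by rewrite abszN chunk_bound.
Qed.

Lemma conformal_vec_sum0 i : \sum_(x in conformal_dom) conformal_vec x i = 0.
Proof.
rewrite sum_conformal_vec (eq_bigl (mem I)) => [| j]; last by rewrite inE.
rewrite [X in _ - X](eq_bigl xpredT) => [| l]; last by rewrite inE.
rewrite sum_chunk // (eq_card (B := [set k : 'I_L | (k < `|w i|)%N])) => [|k].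
  by rewrite card_ord_lt ?(ltnW (abs_w_lt i)) // -mulr_natr natz -intEsg; ring.
by rewrite !inE.
Qed.

Lemma card_chunk_set : #|chunk_set| = m.
Proof. by rewrite card_imset ?card_ord // => l l' []. Qed.

Lemma card_conformal_dom : (#|I| + m <= #|conformal_dom|)%N.
Proof.
pose IT : {set T} := [set inl (inl j) | j in I].
have IT_chunk : IT :&: chunk_set = set0.
  by apply/setP => x; rewrite !inE; apply/andP => -[/imsetP [j _ ->] /imsetP [l]].
have <- : #|IT :|: chunk_set| = (#|I| + m)%N.
  by rewrite cardsU IT_chunk cards0 subn0 card_chunk_set card_imset // => j j' [].
apply/subset_leq_card/subsetP => x.
by rewrite inE => /orP [/imsetP [j jI ->] | /imsetP [l _ ->]]; rewrite inE.
Qed.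

Lemma exists_conformal_subsum : (m.+1 * (2 * m * D + 1) ^ m <= #|I| + m)%N ->
  exists2 B : {set K}, (B \subset I) && (B != set0) &
    forall i, in_seg0 (\sum_(j in B) a j i) (w i).
Proof.
move=> many.
have [|X [X_dom X_chunk X_neq0 X_sum]] := exists_zero_sum_subset_avoiding
    conformal_vec_bound conformal_vec_sum0 (Q := chunk_set).
  by rewrite card_chunk_set ltnS; exact: leq_trans many card_conformal_dom.
have no_chunk l : inr l \in X = false.
  by apply: disjointFl X_chunk _; apply: imset_f.
pose B := [set j | inl (inl j) \in X].
pose copies i := #|[set k : 'I_L | inl (inr (i, k)) \in X]|.
have sumB i : \sum_(j in B) a j i = sgz (w i) *+ copies i.
  have := X_sum i; rewrite sum_conformal_vec [S in _ - S]big_pred0 ?subr0 => [/eqP | l].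
    by rewrite subr_eq0 => /eqP <-; apply: eq_bigl => j; rewrite inE.
  exact: no_chunk.
have copies_le i : (copies i <= `|w i|)%N.
  rewrite -(card_ord_lt (ltnW (abs_w_lt i))); apply/subset_leq_card/subsetP => k.
  by rewrite !inE => /(subsetP X_dom); rewrite inE.
exists B; last by move=> i; rewrite sumB -mulr_natr natz in_seg0_sgz.
rewrite andbC; apply/andP; split; last first.
  by apply/subsetP => j; rewrite inE => /(subsetP X_dom); rewrite inE.
apply: contra X_neq0 => /eqP B0; apply/eqP/setP => x; rewrite inE.
case: x => [[j | [i k]] | l] //; first by move/setP/(_ j): B0; rewrite !inE.
have : copies i == 0%N.
  have := copies_le i; have /eqP := sumB i.
  by rewrite B0 big_set0 eq_sym mulrn_eq0 sgz_eq0 => /orP [// | /eqP ->]; rewrite leqn0.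
by rewrite cards_eq0 => /eqP /setP /(_ k); rewrite !inE.
Qed.

End ConformalSubsum.

(** * The exchange argument *)

Definition round0 (R : archiRealFieldType) (u : R) : int :=
  if 0 <= u then Num.floor u else Num.ceil u.

Lemma round0P (R : archiRealFieldType) (u : R) :
  in_seg0 (round0 u)%:~R u /\ `|u - (round0 u)%:~R| < 1.
Proof.
rewrite /round0 /in_seg0; case: ifPn => [u0 | /negP u0].
  have := floor_itv u; rewrite intrD => /andP [lo hi].
  have : 0 <= (Num.floor u)%:~R :> R by rewrite ler0z floor_ge0.
  rewrite ger0_norm ?subr_ge0 // => f0.
  by split; [apply/orP; left; apply/andP; split | lra].
have := ceil_itv u; rewrite intrB => /andP [lo hi].
have : (Num.ceil u)%:~R <= 0 :> R by rewrite lerz0 ceil_le0; lra.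
rewrite ler0_norm ?subr_le0 // => c0.
by split; [apply/orP; right; apply/andP; split | lra].
Qed.

Lemma convex_exchange (R : realFieldType) (h : R -> R) (a u c : R) :
  convex_fun h -> in_seg0 c u -> h (a + c) + h (a + u - c) <= h a + h (a + u).
Proof.
move=> h_conv c_seg; have [u0 | u_neq0] := eqVneq u 0.
  have -> : c = 0 by move: c_seg; rewrite /in_seg0 u0 => /orP [] /andP [*]; lra.
  by rewrite u0 !addr0 subr0.
pose t := c / u.
have tu : t * u = c by rewrite /t divfK.
have t01 : 0 <= t <= 1.
  move: c_seg; rewrite /in_seg0 /t => /orP [] /andP [c_lo c_hi].
    have u_gt0 : 0 < u by rewrite lt_neqAle eq_sym u_neq0 (le_trans c_lo c_hi).
    by rewrite divr_ge0 ?ler_pdivrMr ?mul1r // ltW.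
  have u_lt0 : u < 0 by rewrite lt_neqAle u_neq0 (le_trans c_lo c_hi).
  by rewrite -mulrNN -invrN divr_ge0 ?ler_pdivrMr ?mul1r ?oppr_gt0 ?lerN2 ?oppr_ge0 // ltW.
case/andP: t01 => t0 t1.
have := h_conv (a + u) a t t0 t1; have := h_conv (a + u) a (1 - t).
rewrite subr_ge0 t1 subKr.
have -> : t * (a + u) + (1 - t) * a = a + c by rewrite -tu; ring.
have -> : (1 - t) * (a + u) + t * a = a + u - c by rewrite -tu; ring.
move=> /(_ isT) h2 h1; lra.
Qed.

Definition swap_on (R : Type) (n : nat) (B : {set 'I_n}) (x y : 'I_n -> R) j :=
  if j \in B then y j else x j.

Lemma matvec_swap_on (R : realFieldType) m n (W : 'M[int]_(m, n)) B (x y : 'I_n -> R) i :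
  matvec W (swap_on B x y) i = matvec W x i + \sum_(j in B) (W i j)%:~R * (y j - x j).
Proof.
rewrite /matvec [\sum_(j in B) _]big_mkcond -big_split /=; apply: eq_bigr => j _.
by rewrite /swap_on; case: ifP => _; rewrite ?addr0 //; ring.
Qed.

Lemma sepf_swap_le (R : realFieldType) m n (g : 'I_m -> R -> R) (W : 'M[int]_(m, n))
    (B : {set 'I_n}) (x z : 'I_n -> R) :
  (forall i, convex_fun (g i)) ->
  (forall i, in_seg0 (\sum_(j in B) (W i j)%:~R * (z j - x j))
                     (matvec W z i - matvec W x i)) ->
  sepf g W (swap_on B x z) + sepf g W (swap_on B z x) <= sepf g W x + sepf g W z.
Proof.
move=> g_conv B_seg; rewrite /sepf -!big_split /=; apply: ler_sum => i _.
rewrite !matvec_swap_on.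
have -> : \sum_(j in B) (W i j)%:~R * (x j - z j) = - \sum_(j in B) (W i j)%:~R * (z j - x j).
  by rewrite -sumrN; apply: eq_bigr => j _; rewrite -mulrN opprB.
have := convex_exchange (matvec W x i) (g_conv i) (B_seg i).
by rewrite addrCA subrr addr0.
Qed.

Section BinaryPoints.
Variables (R : realFieldType) (n : nat).
Implicit Types (x y z : 'I_n -> R) (B : {set 'I_n}).

Lemma binary_in_box x : is_binary x -> in_box x.
Proof. by move=> x_bin j; case: (x_bin j) => ->; rewrite lexx ler01. Qed.

Lemma swap_on_in_box B x y : in_box x -> in_box y -> in_box (swap_on B x y).
Proof. by move=> x_box y_box j; rewrite /swap_on; case: ifP. Qed.

Lemma swap_on_binary B x y : is_binary x -> (forall j, j \in B -> y j = 0 \/ y j = 1) ->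
  is_binary (swap_on B x y).
Proof. by move=> x_bin y_bin j; rewrite /swap_on; case: ifPn => [/y_bin | _]. Qed.

Lemma l1dist_swap_on B x z :
  l1dist x (swap_on B z x) + \sum_(j in B) `|x j - z j| = l1dist x z.
Proof.
rewrite /l1dist [\sum_(j in B) _]big_mkcond -big_split /=; apply: eq_bigr => j _.
by rewrite /swap_on; case: ifP => _; rewrite ?subrr ?normr0 ?add0r ?addr0.
Qed.

Lemma eq_l1distr x y y' : y =1 y' -> l1dist x y = l1dist x y'.
Proof. by move=> yy'; apply: eq_bigr => j _; rewrite yy'. Qed.

Lemma eq_sepf m (g : 'I_m -> R -> R) (W : 'M[int]_(m, n)) x y :
  x =1 y -> sepf g W x = sepf g W y.
Proof.
by move=> xy; apply: eq_bigr => i _; congr (g i _); apply: eq_bigr => j _; rewrite xy.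
Qed.

Lemma binary_ffunE y : is_binary y -> exists b : {ffun 'I_n -> bool}, y =1 fun j => (b j)%:R.
Proof.
move=> y_bin; exists [ffun j => y j == 1] => j; rewrite ffunE.
by case: (y_bin j) => ->; rewrite ?eqxx // eq_sym oner_eq0.
Qed.

Lemma exists_closest_binary_minimizer m (g : 'I_m -> R -> R) (W : 'M[int]_(m, n)) x :
  exists z, [/\ is_binary z, forall y, is_binary y -> sepf g W z <= sepf g W y &
    forall y, is_binary y -> sepf g W y <= sepf g W z -> l1dist x z <= l1dist x y].
Proof.
pose pt (b : {ffun 'I_n -> bool}) j : R := (b j)%:R.
pose f b := sepf g W (pt b).
pose b0 : {ffun 'I_n -> bool} := [ffun _ => false].
pose bmin := [arg min_(b < b0) f b]%O.
have bmin_min b : f bmin <= f b by rewrite /bmin; case: arg_minP => // b' _; apply.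
pose bcl := [arg min_(b < bmin | f b <= f bmin) l1dist x (pt b)]%O.
have [bcl_min bcl_close] : f bcl <= f bmin /\
    forall b, f b <= f bmin -> l1dist x (pt bcl) <= l1dist x (pt b).
  by rewrite /bcl; case: arg_minP => //= b b_min b_close; split => // b' /b_close.
exists (pt bcl); split.
- by move=> j; rewrite /pt; case: (bcl j); [right | left].
- move=> y /binary_ffunE [b yb]; rewrite (eq_sepf _ _ yb).
  exact: le_trans bcl_min (bmin_min b).
- move=> y /binary_ffunE [b yb]; rewrite (eq_sepf _ _ yb) (eq_l1distr _ yb) => b_min.
  by apply: bcl_close; exact: le_trans b_min bcl_min.
Qed.

End BinaryPoints.

Lemma maxabs_ge m n (W : 'M[int]_(m, n)) i j : (`|W i j| <= maxabs W)%N.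
Proof.
apply: leq_trans (leq_bigmax (F := fun j => `|W i j|%N) j) _.
exact: (leq_bigmax (F := fun i => \max_(j < n) `|W i j|%N) i).
Qed.

Lemma leq_mul_pow_count (m e f k : nat) : (f <= m)%N ->
  (2 * m * (e + 1) ^ m < f + k)%N -> (m.+1 * (e + 1) ^ m <= k + m)%N.
Proof.
case: m => [|m]; rewrite ?expn0; first lia.
have pow_pos : (0 < (e + 1) ^ m.+1)%N by rewrite expn_gt0 addn1.
nia.
Qed.

Section Proximity.
Variables (R : archiRealFieldType) (m n : nat) (W : 'M[int]_(m, n)) (x z : 'I_n -> R).
Hypotheses (x_box : in_box x) (z_bin : is_binary z).

Definition frac_set : {set 'I_n} := [set j | (x j != 0) && (x j != 1)].

Definition flip_set : {set 'I_n} := [set j | (j \notin frac_set) && (z j != x j)].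

Definition flip_sign j : int := if x j == 0 then 1 else -1.

Lemma mem_flip_set j : j \in flip_set -> (x j = 0 \/ x j = 1) /\ z j != x j.
Proof.
rewrite !inE negb_and !negbK => /andP [x_int zx]; split => //.
by case/orP: x_int => /eqP; [left | right].
Qed.

Lemma flip_signE j : j \in flip_set -> z j - x j = (flip_sign j)%:~R.
Proof.
move=> /mem_flip_set [x_bin]; rewrite /flip_sign.
case: x_bin => ->; case: (z_bin j) => ->; rewrite ?eqxx ?oner_eq0 //= => _.
  by rewrite subr0.
by rewrite sub0r.
Qed.

Lemma norm_flip_sign j : `|(flip_sign j)%:~R : R| = 1.
Proof. by rewrite -intr_norm /flip_sign; case: ifP. Qed.

Lemma not_flip_set j : j \notin frac_set -> j \notin flip_set -> z j = x j.
Proof. by move=> j_int; rewrite inE j_int negbK => /eqP. Qed.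

Lemma norm_sub_le1 j : `|x j - z j| <= 1.
Proof.
have := x_box j; case: (z_bin j) => -> /andP [x0 x1];
  by rewrite ler_norml; apply/andP; split; lra.
Qed.

Lemma l1dist_le_frac_flip : l1dist x z <= (#|frac_set| + #|flip_set|)%:R.
Proof.
rewrite natrD -!sumr_const [\sum_(j in frac_set) _]big_mkcond.
rewrite [\sum_(j in flip_set) _]big_mkcond -big_split /=; apply: ler_sum => j _.
case: ifPn => [_ | j_int].
  by apply: le_trans (norm_sub_le1 j) _; rewrite lerDl; case: ifP.
case: ifPn => [/flip_signE | j_same]; last by rewrite not_flip_set // subrr normr0 addr0.
by rewrite distrC add0r => ->; rewrite norm_flip_sign.
Qed.

Lemma matvec_sub_split i : matvec W z i - matvec W x i =
  (\sum_(j in flip_set) W i j * flip_sign j)%:~R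
  + \sum_(j in frac_set) (W i j)%:~R * (z j - x j).
Proof.
rewrite /matvec -sumrB (bigID (mem frac_set)) /= addrC; congr (_ + _); last first.
  by apply: eq_bigr => j _; rewrite mulrBr.
rewrite rmorph_sum /= (bigID (mem flip_set)) /= [X in _ + X]big1 ?addr0; last first.
  by move=> j /andP [j_int j_same]; rewrite -mulrBr not_flip_set // subrr mulr0.
  apply: eq_big => [j | j /andP [_ j_flip]]; last by rewrite -mulrBr flip_signE // intrM.
by case: (boolP (j \in flip_set)) => [| _]; rewrite ?andbT ?andbF // inE => /andP [].
Qed.

Lemma frac_part_bound i :
  `|\sum_(j in frac_set) (W i j)%:~R * (z j - x j)| <= (#|frac_set| * maxabs W)%:R.
Proof.
apply: le_trans (ler_norm_sum _ _ _) _; rewrite mulnC natrM mulr_natr -sumr_const.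
apply: ler_sum => j _; rewrite normrM -[X in _ <= X]mulr1 distrC.
by rewrite ler_pM ?normr_ge0 ?norm_sub_le1 // -intr_norm -natr_absz ler_nat maxabs_ge.
Qed.

Lemma exists_improving_flip : (nfrac x <= m)%N ->
  ((2 * m * (2 * m * maxabs W + 1) ^ m)%N%:R < l1dist x z) ->
  exists2 B : {set 'I_n}, (B \subset flip_set) && (B != set0) &
    forall i, in_seg0 (\sum_(j in B) (W i j)%:~R * (z j - x j)) (matvec W z i - matvec W x i).
Proof.
move=> few_frac far; pose u i := matvec W z i - matvec W x i.
have [|||B /andP [B_flip B_neq0] B_seg] := @exists_conformal_subsum _ m (maxabs W)
    (fun j i => W i j * flip_sign j) flip_set (fun i => round0 (u i)).
- by move=> j i _; rewrite abszM /flip_sign; case: ifP => _; rewrite muln1 maxabs_ge.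
- move=> i; have [_ near] := round0P (u i).
  have r_bound : `|\sum_(j in frac_set) (W i j)%:~R * (z j - x j)| <= (m * maxabs W)%:R.
    by apply: le_trans (frac_part_bound i) _; rewrite ler_nat leq_mul2r few_frac orbT.
  rewrite -ltnS -(ltr_nat R) natr_absz intr_norm intrB -addn1 natrD.
  have := matvec_sub_split i; rewrite -/(u i).
  set S := (\sum_(j in flip_set) _)%:~R.
  set r := \sum_(j in frac_set) _ in r_bound * => u_split.
  rewrite (_ : S - _ = u i - (round0 (u i))%:~R - r); last by rewrite u_split; ring.
  by apply: le_lt_trans (ler_normB _ _) _; lra.
- apply: (leq_mul_pow_count few_frac); rewrite -(ltr_nat R).
  exact: lt_le_trans far l1dist_le_frac_flip.
exists B; first by rewrite B_flip B_neq0.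
move=> i; apply: in_seg0_trans (round0P (u i)).1.
have -> : \sum_(j in B) (W i j)%:~R * (z j - x j) = (\sum_(j in B) W i j * flip_sign j)%:~R.
  rewrite rmorph_sum; apply: eq_bigr => j jB.
  by rewrite rmorphM /= flip_signE //; exact: (subsetP B_flip).
by rewrite in_seg0_intr.
Qed.

End Proximity.

Theorem mainTheorem6 (R : realType) (m n : nat)
  (g : 'I_m -> R -> R) (W : 'M[int]_(m, n))
  (hg : forall i, convex_fun (g i))
  (xs : 'I_n -> R)
  (hxbox : in_box xs)
  (hxmin : forall y : 'I_n -> R, in_box y -> sepf g W xs <= sepf g W y)
  (hxfrac : (nfrac xs <= m)%N) :
  exists zs : 'I_n -> R,
    [/\ is_binary zs,
        (forall y : 'I_n -> R, is_binary y -> sepf g W zs <= sepf g W y) &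
        l1dist xs zs <= ((2 * m * (2 * m * maxabs W + 1) ^ m)%N)%:R].
Proof.
have [zs [zs_bin zs_min zs_closest]] := exists_closest_binary_minimizer g W xs.
exists zs; split => //; rewrite leNgt; apply/negP => far.
have [B /andP [B_flip B_neq0] B_seg] := exists_improving_flip hxbox zs_bin hxfrac far.
have B_flipP j : j \in B -> (xs j = 0 \/ xs j = 1) /\ zs j != xs j.
  by move/(subsetP B_flip); exact: mem_flip_set.
have z'_bin : is_binary (swap_on B zs xs) by apply: swap_on_binary => // j /B_flipP [].
have x'_ge := hxmin _ (swap_on_in_box B hxbox (binary_in_box zs_bin)).
have z'_min : sepf g W (swap_on B zs xs) <= sepf g W zs.
  by have := sepf_swap_le hg B_seg; lra.
have := zs_closest _ z'_bin z'_min.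
rewrite -{1}(l1dist_swap_on B xs zs) gerDl leNgt => /negP; apply.
have [j jB] := set0Pn _ B_neq0.
rewrite (bigD1 j) //= ltr_pwDl ?sumr_ge0 // normr_gt0 subr_eq0 eq_sym.
by have [] := B_flipP j jB.
Qed.
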